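(* Let $A\in G(n\times m)$, $N\in G(n)$ and $M\in G(m)$. Then $\mathrm{troprank}(A)=\mathrm{troprank}(N\odot A\odot M)$, and $\mathrm{troprank}(A)$ equals the number of columns of $A$ having at least one finite entry.
   Context: $\mathbb{T}=\mathbb{R}\cup\{-\infty\}$ with $a\oplus b=\max\{a,b\}$, $a\odot b=a+b$, and tropical matrix product $(A\odot B)_{ij}=\bigoplus_k a_{ik}\odot b_{kj}$. $G(r\times s)$ is the set of $r\times s$ matrices over $\mathbb{T}$ with at most one finite entry in each row; $G(r)$ is the set of $r\times r$ matrices with exactly one finite entry in each row and each column. The tropical determinant of a square matrix is $\bigoplus_{\sigma}\bigodot_i A_{i,\sigma(i)}$; a minor vanishes if it equals $-\infty$. $\mathrm{troprank}(A)=k$ iff all $(k+1)\times(k+1)$ minors vanish and some $k\times k$ minor does not vanish. *)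

(* Tropical semiring T = R ∪ {-oo} modelled as option R,
   with None = -oo, over an arbitrary real domain R (the paper uses R = reals). *)
From HB Require Import structures.
From mathcomp Require Import all_boot all_order all_algebra all_fingroup.
Set Implicit Arguments. Unset Strict Implicit. Unset Printing Implicit Defensive.
Import Order.TTheory GRing.Theory Num.Theory.
Local Open Scope ring_scope.

Section Trop.
Variable R : realDomainType.

Definition trop := option R.

Definition tadd (a b : trop) : trop :=
  match a, b with
  | None, _ => b
  | _, None => a
  | Some x, Some y => Some (Num.max x y)
  end.

Definition tmul (a b : trop) : trop :=
  match a, b with
  | Some x, Some y => Some (x + y)
  | _, _ => None
  end.

Definition tmxmul (r p s : nat) (A : 'M[trop]_(r, p)) (B : 'M[trop]_(p, s))
  : 'M[trop]_(r, s) :=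
  \matrix_(i, j) \big[tadd/None]_(k < p) tmul (A i k) (B k j).

Definition tdet (k : nat) (A : 'M[trop]_k) : trop :=
  \big[tadd/None]_(s : 'S_k) \big[tmul/Some 0]_(i < k) A i (s i).

Definition has_nonvanishing_minor (r s k : nat) (A : 'M[trop]_(r, s)) : Prop :=
  exists (f : 'I_k -> 'I_r) (g : 'I_k -> 'I_s),
    injective f /\ injective g /\ tdet (mxsub f g A) <> None.

Definition is_troprank (r s : nat) (A : 'M[trop]_(r, s)) (k : nat) : Prop :=
  ~ has_nonvanishing_minor k.+1 A /\ has_nonvanishing_minor k A.

Definition inG (r s : nat) (A : 'M[trop]_(r, s)) : Prop :=
  forall i j1 j2, A i j1 <> None -> A i j2 <> None -> j1 = j2.

Definition inGsq (r : nat) (A : 'M[trop]_r) : Prop :=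
  (forall i, exists! j, A i j <> None) /\ (forall j, exists! i, A i j <> None).

Definition n_finite_cols (r s : nat) (A : 'M[trop]_(r, s)) : nat :=
  #|[set j : 'I_s | [exists i : 'I_r, A i j != None]]|.

End Trop.

From mathcomp Require Import all_boot all_order all_algebra all_fingroup.
Set Implicit Arguments. Unset Strict Implicit. Unset Printing Implicit Defensive.

(* A tropical determinant is finite iff some permutation has only finite
   entries.  Hence a nonvanishing k x k minor of any matrix picks k distinct
   columns containing a finite entry, so the rank is at most the number of
   finite columns.  Conversely, for A in G(n x m), choosing one finite entry in
   each finite column gives entries in pairwise distinct rows (a row has at most
   one finite entry), i.e. a minor with finite diagonal.  Finally, multiplying
   by matrices of G(n) and G(m) keeps A in G and only relabels rows and
   columns, so it preserves the number of finite columns. *)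

Section TropicalRank.
Variable R : realDomainType.

Lemma tmul_neq_None (a b : trop R) : (tmul a b != None) = (a != None) && (b != None).
Proof. by case: a; case: b. Qed.

Lemma big_tadd_neq_None (I : eqType) (r : seq I) (P : pred I) (F : I -> trop R) :
  (\big[@tadd R/None]_(i <- r | P i) F i != None) =
  has (fun i => P i && (F i != None)) r.
Proof.
elim: r => [|x r IH]; first by rewrite big_nil.
rewrite big_cons /=; case: (P x) => //=.
by case: (F x) => [a|] //=; case: (\big[_/_]_(i <- r | P i) F i).
Qed.

Lemma big_tmul_neq_None (I : eqType) (r : seq I) (P : pred I) (F : I -> trop R) :
  (\big[@tmul R/Some 0%R]_(i <- r | P i) F i != None) =
  all (fun i => P i ==> (F i != None)) r.
Proof.
elim: r => [|x r IH]; first by rewrite big_nil.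
rewrite big_cons /= -IH; case: (P x) => //=.
by rewrite tmul_neq_None.
Qed.

Lemma tsum_neq_None (I : finType) (F : I -> trop R) :
  \big[@tadd R/None]_i F i != None <-> exists i, F i != None.
Proof.
rewrite big_tadd_neq_None; split; first by case/hasP => i _; exists i.
by case=> i Fi; apply/hasP; exists i; rewrite ?mem_index_enum.
Qed.

Lemma tprod_neq_None (I : finType) (F : I -> trop R) :
  \big[@tmul R/Some 0%R]_i F i != None <-> forall i, F i != None.
Proof.
rewrite big_tmul_neq_None; split; first by move/allP => FP i; apply: FP.
by move=> FP; apply/allP => i _; apply: FP.
Qed.

Lemma tdet_neq_None k (A : 'M[trop R]_k) :
  tdet A != None <-> exists s : 'S_k, forall i, A i (s i) != None.
Proof.
split=> [/tsum_neq_None [s /tprod_neq_None Hs] | [s Hs]]; first by exists s.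
by apply/tsum_neq_None; exists s; apply/tprod_neq_None.
Qed.

Lemma tmxmul_neq_None r p s (X : 'M[trop R]_(r, p)) (Y : 'M[trop R]_(p, s)) i j :
  tmxmul X Y i j != None <-> exists l, (X i l != None) && (Y l j != None).
Proof.
rewrite mxE; split=> [/tsum_neq_None [l] | [l]]; rewrite ?tmul_neq_None.
  by exists l.
by move=> XYl; apply/tsum_neq_None; exists l; rewrite tmul_neq_None.
Qed.

Lemma nonvanishing_minor_le_n_finite_cols r s k (A : 'M[trop R]_(r, s)) :
  has_nonvanishing_minor k A -> k <= n_finite_cols A.
Proof.
case=> f [g [_ [injg /eqP /tdet_neq_None [sg Hsg]]]].
have inj_gsg : injective (g \o sg) by move=> x y /injg /perm_inj.
rewrite -[k]card_ord -(card_imset _ inj_gsg) /n_finite_cols.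
apply/subset_leq_card/subsetP => _ /imsetP [i _ ->].
by rewrite inE; apply/existsP; exists (f i); have := Hsg i; rewrite mxE.
Qed.

Lemma inG_nonvanishing_minor r s k (A : 'M[trop R]_(r, s)) :
  inG A -> k <= n_finite_cols A -> has_nonvanishing_minor k A.
Proof.
rewrite /n_finite_cols => GA; set S := [set j | _] => leSk.
pose g (i : 'I_k) : 'I_s := enum_val (widen_ord leSk i).
have injg : injective g by move=> x y /enum_val_inj /(congr1 val) /= /val_inj.
have col_finite i : exists x, A x (g i) != None.
  by apply/existsP; have := enum_valP (widen_ord leSk i); rewrite inE.
pose f i := xchoose (col_finite i).
have Afg i : A (f i) (g i) != None := xchooseP (col_finite i).
exists f, g; split; last split=> //.
  by move=> x y Efxy; apply: injg; apply: (GA (f x)); last rewrite Efxy; exact/eqP.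
by apply/eqP/tdet_neq_None; exists 1%g => i; rewrite mxE perm1.
Qed.

Lemma is_troprank_inG r s (A : 'M[trop R]_(r, s)) k :
  inG A -> is_troprank A k <-> k = n_finite_cols A.
Proof.
move=> GA; split=> [[noMinor Minor] | ->].
  apply/eqP; rewrite eqn_leq (nonvanishing_minor_le_n_finite_cols Minor) leqNgt.
  by apply/negP => /(inG_nonvanishing_minor GA) /noMinor.
split; last exact: inG_nonvanishing_minor.
by move/nonvanishing_minor_le_n_finite_cols; rewrite ltnn.
Qed.

Lemma inGsq_inG r (N : 'M[trop R]_r) : inGsq N -> inG N.
Proof.
move=> [rowN _] i j1 j2 Nij1 Nij2; have [j [_ uniq_j]] := rowN i.
by rewrite -(uniq_j _ Nij1) -(uniq_j _ Nij2).
Qed.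

Lemma inG_tmxmul r p s (X : 'M[trop R]_(r, p)) (Y : 'M[trop R]_(p, s)) :
  inG X -> inG Y -> inG (tmxmul X Y).
Proof.
move=> GX GY i j1 j2.
move=> /eqP /tmxmul_neq_None [l1 /andP [/eqP X1 /eqP Y1]].
move=> /eqP /tmxmul_neq_None [l2 /andP [/eqP X2 /eqP Y2]].
by move: Y1; rewrite (GX i l1 l2 X1 X2) => /GY; apply.
Qed.

Lemma n_finite_cols_tmxmul_l r p s (N : 'M[trop R]_(r, p)) (A : 'M[trop R]_(p, s)) :
  (forall l, exists i, N i l != None) ->
  n_finite_cols (tmxmul N A) = n_finite_cols A.
Proof.
move=> colN; apply: eq_card => j; rewrite !inE.
apply/existsP/existsP => [[i /tmxmul_neq_None [l /andP [_ Alj]]] | [l Alj]].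
  by exists l.
have [i Nil] := colN l.
by exists i; apply/tmxmul_neq_None; exists l; rewrite Nil.
Qed.

Lemma n_finite_cols_tmxmul_r r s (A : 'M[trop R]_(r, s)) (M : 'M[trop R]_s) :
  inGsq M -> n_finite_cols (tmxmul A M) = n_finite_cols A.
Proof.
case=> rowM colM.
have row_finite l : exists j, M l j != None.
  by have [j [/eqP Mlj _]] := rowM l; exists j.
pose col l := xchoose (row_finite l).
have Mcol l : M l (col l) != None := xchooseP (row_finite l).
have col_uniq l j : M l j != None -> j = col l.
  have [x [_ ux]] := rowM l => /eqP Mlj.
  by rewrite -(ux _ Mlj) -(ux _ (elimN eqP (Mcol l))).
have inj_col : injective col.
  move=> x y Exy; have [z [_ uz]] := colM (col x).
  by rewrite -(uz x (elimN eqP (Mcol x))); apply: uz; rewrite Exy; apply/eqP/Mcol.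
rewrite /n_finite_cols -[RHS](card_imset _ inj_col); apply: eq_card => j.
rewrite inE; apply/existsP/imsetP => [[i /tmxmul_neq_None [l /andP [Ail Mlj]]] | [l]].
  by exists l; [rewrite inE; apply/existsP; exists i | apply: col_uniq].
rewrite inE => /existsP [i Ail] ->.
by exists i; apply/tmxmul_neq_None; exists l; rewrite Ail Mcol.
Qed.

End TropicalRank.

Theorem mainTheorem3 (R : realDomainType) (n m : nat)
    (A : 'M[trop R]_(n, m)) (N : 'M[trop R]_n) (M : 'M[trop R]_m) :
  inG A -> inGsq N -> inGsq M ->
  (forall k, is_troprank A k <-> is_troprank (tmxmul (tmxmul N A) M) k) /\
  (forall k, is_troprank A k <-> k = n_finite_cols A).
Proof.
move=> GA GN GM.
have GNAM : inG (tmxmul (tmxmul N A) M).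
  by apply: inG_tmxmul (inGsq_inG GM); apply: inG_tmxmul GA; apply: inGsq_inG.
have colN l : exists i, N i l != None.
  by have [_ /(_ l) [i [/eqP Nil _]]] := GN; exists i.
have cols : n_finite_cols (tmxmul (tmxmul N A) M) = n_finite_cols A.
  by rewrite n_finite_cols_tmxmul_r // n_finite_cols_tmxmul_l.
split=> k; last exact: is_troprank_inG.
apply: iff_trans (is_troprank_inG k GA) _; rewrite -cols.
exact: iff_sym (is_troprank_inG k GNAM).
Qed.
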